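(* Let $k\geq 4$ and let $G$ be a $(P_1+P_5)$-free graph with a $P_k$-suitable pair $(u,v)$ such that $N(u)$ is an independent set. Then $G$ has a $P_k$-witness structure $\{W(p_1),\dots,W(p_k)\}$ with $W(p_1)=\{u\}$ and $W(p_k)=\{v\}$ such that $W(p_2)\setminus N(u)$ contains a set $S$ with $|S|\le 2$ for which $N(u)\cup S$ induces a connected subgraph of $G$.
   Context: Writing $P_k=p_1\cdots p_k$, a $P_k$-witness structure of $G$ is a partition $\{W(p_1),\dots,W(p_k)\}$ of $V(G)$ into nonempty sets, each inducing a connected subgraph, such that $W(p_i)$ and $W(p_j)$ are joined by an edge iff $|i-j|=1$. A pair of non-adjacent vertices $(u,v)$ is $P_k$-suitable if $G$ has such a witness structure with $W(p_1)=\{u\}$ and $W(p_k)=\{v\}$. A graph is $H$-free if it has no induced subgraph isomorphic to $H$; $+$ denotes disjoint union. *)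

(* A simple graph is a symmetric irreflexive relation e on a finType T. *)
From mathcomp Require Import all_boot.
Set Implicit Arguments. Unset Strict Implicit. Unset Printing Implicit Defensive.

Section Graphs.
Variable T : finType.
Variable e : rel T.

Definition nbhd (u : T) : {set T} := [set x | e u x].

Definition induced_rel (A : {set T}) : rel T :=
  [rel x y | [&& e x y, x \in A & y \in A]].
Definition connected_set (A : {set T}) : Prop :=
  A != set0 /\ forall x y, x \in A -> y \in A -> connect (induced_rel A) x y.

Definition independent_set (A : {set T}) : Prop :=
  forall x y, x \in A -> y \in A -> ~~ e x y.

Definition set_adj (A B : {set T}) : bool :=
  [exists x in A, exists y in B, e x y].

(* P_k-witness structure, parts indexed by 1..k: W i = W(p_i) *)
Definition witness_structure (k : nat) (W : nat -> {set T}) : Prop :=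
  [/\ (forall i, 1 <= i <= k -> W i != set0 /\ connected_set (W i)),
      (forall i j, 1 <= i <= k -> 1 <= j <= k -> i != j -> [disjoint W i & W j]),
      (forall x, exists2 i, 1 <= i <= k & x \in W i) &
      (forall i j, 1 <= i <= k -> 1 <= j <= k -> i != j ->
         (set_adj (W i) (W j) <-> (i == j.+1) || (j == i.+1)))].

Definition suitable_pair (k : nat) (u v : T) : Prop :=
  ~~ e u v /\
  exists W, [/\ witness_structure k W, W 1 = [set u] & W k = [set v]].

Definition contains_induced (n : nat) (h : rel 'I_n) : Prop :=
  exists f : 'I_n -> T, injective f /\ forall i j, e (f i) (f j) = h i j.

End Graphs.

(* P_1 + P_5 on vertex set {0,...,5}: 0 isolated, 1-2-3-4-5 a path *)
Definition P1P5 : rel 'I_6 :=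
  fun i j => [&& 1 <= i, 1 <= j & (val i == (val j).+1) || (val j == (val i).+1)].

Definition H_free (T : finType) (e : rel T) (n : nat) (h : rel 'I_n) : Prop :=
  ~ contains_induced e h.

From mathcomp Require Import all_boot zify.

(* Every neighbour of u lies in W(p_2), and v is adjacent neither to u nor to
   any vertex of W(p_2); so v together with an induced P_5 inside
   {u} ∪ W(p_2) would be an induced P_1 + P_5.  Let X = W(p_2) \ N(u) and, for
   x ∈ X, let A(x) be the set of neighbours of u adjacent to x.  If some
   neighbour of u has no neighbour in X, connectivity of W(p_2) and
   independence of N(u) force N(u) to be a single vertex, and S = ∅.
   Otherwise the sets A(x) of non-adjacent x, y ∈ X are comparable (else
   y-a-u-b-x is an induced P_5), and if y, x ∈ X are adjacent with
   A(y) ⊄ A(x) then A(x) ∪ A(y) = N(u) (else c-u-b-y-x is one).  Take x ∈ X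
   with |A(x)| maximal: either A(x) = N(u) and S = {x}, or some c ∉ A(x) has
   a neighbour y ∈ X, which maximality forces to be adjacent to x, and
   S = {x, y}. *)

Set Implicit Arguments.
Unset Strict Implicit.
Unset Printing Implicit Defensive.

Lemma P1P5_row_inj (i j : 'I_6) : P1P5 i =1 P1P5 j -> i = j.
Proof.
move=> H; apply: val_inj.
have := H (@Ordinal 6 1 isT); have := H (@Ordinal 6 2 isT);
have := H (@Ordinal 6 3 isT); have := H (@Ordinal 6 4 isT);
have := H (@Ordinal 6 5 isT).
clear H; by case: i => [[|[|[|[|[|[|i]]]]]] Hi] //=; case: j => [[|[|[|[|[|[|j]]]]]] Hj].
Qed.

Section Graph.
Variables (T : finType) (e : rel T).
Hypotheses (eS : symmetric e) (eI : irreflexive e).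

Lemma no_induced_P1P5 v p1 p2 p3 p4 p5 :
  H_free e P1P5 ->
  e p1 p2 -> e p2 p3 -> e p3 p4 -> e p4 p5 ->
  ~~ e p1 p3 -> ~~ e p1 p4 -> ~~ e p1 p5 -> ~~ e p2 p4 -> ~~ e p2 p5 ->
  ~~ e p3 p5 ->
  ~~ e v p1 -> ~~ e v p2 -> ~~ e v p3 -> ~~ e v p4 -> ~~ e v p5 -> False.
Proof.
move=> Hf h12 h23 h34 h45 n13 n14 n15 n24 n25 n35 nv1 nv2 nv3 nv4 nv5.
pose f (i : 'I_6) := nth v [:: v; p1; p2; p3; p4; p5] i.
have adjE := (eI, h12, h23, h34, h45, negbTE n13, negbTE n14, negbTE n15,
  negbTE n24, negbTE n25, negbTE n35, negbTE nv1, negbTE nv2, negbTE nv3,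
  negbTE nv4, negbTE nv5).
have fE i j : e (f i) (f j) = P1P5 i j.
  by case: i j => [[|[|[|[|[|[|i]]]]]] Hi] // [[|[|[|[|[|[|j]]]]]] Hj] //;
    rewrite /f /= ?adjE // eS ?adjE.
apply: Hf; exists f; split=> // i j fij.
by apply: P1P5_row_inj => l; rewrite -!fE fij.
Qed.

Lemma induced_rel_sym A : symmetric (induced_rel e A).
Proof. by move=> x y; rewrite /induced_rel /= eS; congr (_ && _); apply: andbC. Qed.

Lemma connected_set1 x : connected_set e [set x].
Proof.
split; first by apply/set0Pn; exists x; rewrite set11.
by move=> y z /set1P -> /set1P ->.
Qed.

Lemma connected_set2 x y : e x y -> connected_set e [set x; y].
Proof.
move=> exy; split; first by apply/set0Pn; exists x; rewrite set21.
have xy : induced_rel e [set x; y] x y by rewrite /induced_rel /= exy set21 set22.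
have yx : induced_rel e [set x; y] y x by rewrite induced_rel_sym.
by move=> a b /set2P [] -> /set2P [] ->; rewrite ?connect0 ?connect1.
Qed.

Lemma connected_setU_dominated (N S : {set T}) :
  connected_set e S -> (forall a, a \in N -> exists2 s, s \in S & e a s) ->
  connected_set e (N :|: S).
Proof.
move=> [S0 connS] domN; split.
  by case/set0Pn: S0 => s sS; apply/set0Pn; exists s; rewrite inE sS orbT.
have liftS : subrel (connect (induced_rel e S)) (connect (induced_rel e (N :|: S))).
  apply: connect_sub => x y /and3P [exy xS yS].
  by apply: connect1; rewrite /induced_rel /= exy !inE xS yS !orbT.
have toS a : a \in N :|: S ->
    exists2 s, s \in S & connect (induced_rel e (N :|: S)) a s.
  case/setUP => [aN | aS]; last by exists a.
  have [s sS as_] := domN a aN; exists s => //.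
  by apply: connect1; rewrite /induced_rel /= as_ !inE aN sS orbT.
move=> a b aNS bNS.
have [s sS as_] := toS a aNS; have [t tS bt] := toS b bNS.
apply: connect_trans as_ (connect_trans (liftS _ _ (connS s t sS tS)) _).
by rewrite (sym_connect_sym (@induced_rel_sym _)).
Qed.

Section Witness.
Variables (k : nat) (W : nat -> {set T}).
Hypothesis WS : witness_structure e k W.

Lemma witness_edge_index i j x y :
  1 <= i <= k -> 1 <= j <= k -> i != j -> x \in W i -> y \in W j -> e x y ->
  (i == j.+1) || (j == i.+1).
Proof.
case: WS => _ _ _ Hadj ik jk ij xi yj exy; apply/(Hadj i j ik jk ij).
by apply/existsP; exists x; rewrite xi; apply/existsP; exists y; rewrite yj.
Qed.

Lemma witness_far_nonadj i j x y :
  1 <= i -> j <= k -> i.+1 < j -> x \in W i -> y \in W j -> ~~ e x y.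
Proof.
move=> i1 jk ij xi yj; apply/negP => exy.
have ik : 1 <= i <= k by lia.
have jk' : 1 <= j <= k by lia.
have neq_ij : i != j by lia.
by have /orP [] := witness_edge_index ik jk' neq_ij xi yj exy; lia.
Qed.

Lemma nbhd_sub_witness2 u : W 1 = [set u] -> nbhd e u \subset W 2.
Proof.
case: WS => _ _ Hcov _ W1; apply/subsetP => a; rewrite inE => ua.
have [i ik ai] := Hcov a.
have [i1|i1] := eqVneq i 1.
  by move: ai ua; rewrite i1 W1 => /set1P ->; rewrite eI.
have u1 : u \in W 1 by rewrite W1 set11.
have k1 : 1 <= 1 <= k by move: ik; lia.
have n1i : 1 != i by rewrite eq_sym.
case/orP: (witness_edge_index k1 ik n1i u1 ai ua) => /eqP i2; last by rewrite -i2.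
by exfalso; lia.
Qed.

Lemma nbhd_neq0 u : 2 <= k -> W 1 = [set u] -> nbhd e u != set0.
Proof.
case: WS => _ _ _ Hadj k2 W1.
have k1 : 1 <= 1 <= k by lia.
have k2' : 1 <= 2 <= k by lia.
case/existsP: ((Hadj 1 2 k1 k2' isT).2 isT) => x /andP [].
rewrite W1 => /set1P -> /existsP [y /andP [_ uy]].
by apply/set0Pn; exists y; rewrite inE.
Qed.
End Witness.

Definition cnbhd x y := nbhd e x :&: nbhd e y.

Section NbhdConnectedExtension.
Variables (u v : T) (D : {set T}).
Hypotheses (Hf : H_free e P1P5) (indN : independent_set e (nbhd e u)).
Hypotheses (N0 : nbhd e u != set0) (ND : nbhd e u \subset D).
Hypotheses (connD : connected_set e D) (vu : ~~ e v u).
Hypothesis vD : forall w, w \in D -> ~~ e v w.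

Local Notation N := (nbhd e u).
Local Notation X := (D :\: nbhd e u).

Lemma mem_outer_nbhd x : x \in X -> x \in D /\ ~~ e u x.
Proof. by case/setDP => xD; rewrite inE. Qed.

Lemma nbhd_nonadj_v a : a \in N -> ~~ e v a.
Proof. by move=> aN; apply/vD/(subsetP ND). Qed.

Lemma nbhd_eq_set1 a : a \in N -> (forall x, x \in X -> ~~ e a x) -> N = [set a].
Proof.
move=> aN noX; apply/setP => b; apply/idP/set1P => [bN | ->] //.
have [_ /(_ a b (subsetP ND a aN) (subsetP ND b bN))] := connD.
case/connectP => [[|w p]] /=; first by move=> _ ->.
case/andP => /and3P [aw _ wD] _ _.
have wX : w \in X.
  rewrite inE wD andbT; apply/negP => wN.
  by move: (indN aN wN); rewrite aw.
by move: (noX w wX); rewrite aw.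
Qed.

Lemma cnbhd_comparable x y : x \in X -> y \in X -> ~~ e x y ->
  cnbhd u x \subset cnbhd u y \/ cnbhd u y \subset cnbhd u x.
Proof.
move=> xX yX nxy.
have [|/subsetPn [b bx nby]] := boolP (cnbhd u x \subset cnbhd u y); first by left.
right; apply/subsetP => a ay; apply/negPn/negP => nax.
move: bx ay nby nax; rewrite !inE => /andP [ub xb] /andP [ua ya].
rewrite ub ua /= => nyb nxa.
have [xD nux] := mem_outer_nbhd xX; have [yD nuy] := mem_outer_nbhd yX.
have aN : a \in N by rewrite inE.
have bN : b \in N by rewrite inE.
have au : e a u by rewrite eS.
have bx : e b x by rewrite eS.
have nyu : ~~ e y u by rewrite eS.
have nyx : ~~ e y x by rewrite eS.
have nax' : ~~ e a x by rewrite eS.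
exact: (no_induced_P1P5 Hf ya au ub bx nyu nyb nyx (indN aN bN) nax' nux
  (vD yD) (nbhd_nonadj_v aN) vu (nbhd_nonadj_v bN) (vD xD)).
Qed.

Lemma cnbhd_cover y z : y \in X -> z \in X -> e y z ->
  ~~ (cnbhd u y \subset cnbhd u z) -> N \subset cnbhd u y :|: cnbhd u z.
Proof.
move=> yX zX yz /subsetPn [b yb nzb]; apply/subsetP => c cN.
move: (cN) yb nzb; rewrite !inE => uc /andP [ub yb]; rewrite uc ub /= => nzb.
apply/negPn/negP; rewrite negb_or => /andP [nyc nzc].
have [yD nuy] := mem_outer_nbhd yX; have [zD nuz] := mem_outer_nbhd zX.
have bN : b \in N by rewrite inE.
have cu : e c u by rewrite eS.
have by_ : e b y by rewrite eS.
have ncy : ~~ e c y by rewrite eS.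
have ncz : ~~ e c z by rewrite eS.
have nbz : ~~ e b z by rewrite eS.
exact: (no_induced_P1P5 Hf cu ub by_ yz (indN cN bN) ncy ncz nuy nuz nbz
  (nbhd_nonadj_v cN) vu (nbhd_nonadj_v bN) (vD yD) (vD zD)).
Qed.

Lemma nbhd_connected_extension :
  exists S : {set T}, [/\ S \subset X, #|S| <= 2 & connected_set e (N :|: S)].
Proof.
have [/existsP [a /andP [aN /forall_inP noX]] | ] :=
    boolP [exists a in N, [forall x in X, ~~ e a x]].
  exists set0; rewrite sub0set cards0 setU0 (nbhd_eq_set1 aN noX).
  by split=> //; apply: connected_set1.
rewrite negb_exists_in => /forall_inP outer_nbr.
have {}outer_nbr a : a \in N -> exists2 x, x \in X & e a x.
  by move=> /outer_nbr; rewrite negb_forall_in => /exists_inP [x ? /negPn]; exists x.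
have [x0 x0X _] := outer_nbr _ (xchooseP (set0Pn _ N0)).
have [x xX xmax] :
    exists2 x, x \in X & {in X, forall z, #|cnbhd u z| <= #|cnbhd u x|}.
  by case: (arg_maxnP (fun z => #|cnbhd u z|) x0X) => x; exists x.
have [Nx | /subsetPn [c cN ncx]] := boolP (N \subset cnbhd u x).
  exists [set x]; rewrite sub1set xX cards1; split=> //.
  apply: connected_setU_dominated (connected_set1 x) _ => a /(subsetP Nx).
  by rewrite !inE => /andP [_ xa]; exists x; rewrite ?set11 // eS.
have [y yX cy] := outer_nbr c cN.
have nyx : ~~ (cnbhd u y \subset cnbhd u x).
  by apply/subsetPn; exists c; rewrite // inE cN inE eS.
have xy : e x y.
  apply/negPn/negP => nxy.
  case: (cnbhd_comparable xX yX nxy) => [xy_sub | yx_sub]; last by rewrite yx_sub in nyx.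
  have xy_proper : cnbhd u x \proper cnbhd u y by rewrite properE xy_sub.
  by move: (proper_card xy_proper); rewrite ltnNge xmax.
have cover := cnbhd_cover yX xX (etrans (eS y x) xy) nyx.
exists [set x; y]; split.
- by apply/subsetP => z /set2P [] ->.
- by rewrite cards2; case: (x != y).
apply: connected_setU_dominated (connected_set2 xy) _ => a aN.
case/setUP: (subsetP cover a aN); rewrite !inE => /andP [_ za].
  by exists y; rewrite ?set22 // eS.
by exists x; rewrite ?set21 // eS.
Qed.
End NbhdConnectedExtension.
End Graph.

Theorem lemma17 (T : finType) (e : rel T) (k : nat) (u v : T) :
  symmetric e -> irreflexive e ->
  4 <= k ->
  H_free e P1P5 ->
  suitable_pair e k u v ->
  independent_set e (nbhd e u) ->
  exists W : nat -> {set T},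
    [/\ witness_structure e k W, W 1 = [set u], W k = [set v] &
      exists S : {set T},
        [/\ S \subset W 2 :\: nbhd e u, #|S| <= 2 &
            connected_set e (nbhd e u :|: S)]].
Proof.
move=> eS eI k4 Hf [nuv [W [WS W1 Wk]]] indN.
exists W; split=> //.
have vk : v \in W k by rewrite Wk set11.
have v_far w : w \in W 2 -> ~~ e v w.
  by move=> w2; rewrite eS; apply: (witness_far_nonadj WS _ (leqnn k) _ w2 vk) => //; lia.
have k2 : 1 < k by lia.
have connW2 : connected_set e (W 2) by case: WS => /(_ 2) [] //; lia.
have nvu : ~~ e v u by rewrite eS.
exact: (nbhd_connected_extension eS eI Hf indN (nbhd_neq0 WS k2 W1)
  (nbhd_sub_witness2 eI WS W1) connW2 nvu v_far).
Qed.
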